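(* Let $L$ be a split regular Hom-Lie color algebra with symmetric root system $\Lambda$. Then: (1) for every $\alpha\in\Lambda$, $L_{\Lambda_\alpha}=H_{\Lambda_\alpha}\oplus V_{\Lambda_\alpha}$ is an ideal of $L$; (2) if $L$ is simple, then every $\alpha\in\Lambda$ is connected to every $\beta\in\Lambda$, and $H=\sum_{\alpha\in\Lambda}[L_\alpha,L_{-\alpha}]$.
   Context: Let $\mathbb{K}$ be a field and $\Gamma$ an abelian group. A bi-character is $\varepsilon:\Gamma\times\Gamma\to\mathbb{K}\setminus\{0\}$ with $\varepsilon(a,b)\varepsilon(b,a)=1$, $\varepsilon(a,b+c)=\varepsilon(a,b)\varepsilon(a,c)$, $\varepsilon(a+b,c)=\varepsilon(a,c)\varepsilon(b,c)$. A Hom-Lie color algebra $(L,[\cdot,\cdot],\phi,\varepsilon)$ is a $\Gamma$-graded space $L=\bigoplus_gL_g$ with bilinear $[\cdot,\cdot]$, $[L_g,L_h]\subset L_{g+h}$, linear $\phi$ with $\phi(L_g)\subset L_g$, $\phi([x,y])=[\phi x,\phi y]$, such that for homogeneous $x,y,z$ of degrees $\bar x,\bar y,\bar z$: $[x,y]=-\varepsilon(\bar x,\bar y)[y,x]$ and $\varepsilon(\bar z,\bar x)[\phi(x),[y,z]]+\varepsilon(\bar x,\bar y)[\phi(y),[z,x]]+\varepsilon(\bar y,\bar z)[\phi(z),[x,y]]=0$; regular means $\phi$ bijective. A subalgebra is a graded subspace $A$ with $[A,A]\subset A$, $\phi(A)=A$; abelian if $[A,A]=0$. An ideal is a graded subspace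 $I$ with $[I,L]\subset I$ and $\phi(I)=I$. $L$ is simple if $[L,L]\neq0$ and its only ideals are $0$ and $L$. $H=\bigoplus_gH_g$ is a maximal abelian graded subalgebra (so $\phi(H_0)=H_0$). For linear $\alpha:H_0\to\mathbb{K}$, $L_\alpha=\{v:[h,v]=\alpha(h)\phi(v)\ \forall h\in H_0\}$; $\Lambda=\{\alpha\in H_0^*\setminus\{0\}:L_\alpha\neq0\}$; $L$ is split if $L=H\oplus(\bigoplus_{\alpha\in\Lambda}L_\alpha)$. $\Lambda$ is symmetric if $\alpha\in\Lambda\Rightarrow-\alpha\in\Lambda$. For $z\in\mathbb{Z}$, $\alpha\phi^{z}:=\alpha\circ(\phi|_{H_0})^{z}$; $\mathbb{N}=\{0,1,2,\dots\}$. Connection: for $\alpha,\beta\in\Lambda$, $\alpha$ is connected to $\beta$ if there exist $k\ge1$ and $\alpha_1,\dots,\alpha_k\in\Lambda$ such that: if $k=1$, $\alpha_1\in\{\alpha\phi^{-n}:n\in\mathbb{N}\}\cap\{\pm\beta\phi^{-m}:m\in\mathbb{N}\}$; if $k\ge2$, then $\alpha_1\in\{\alpha\phi^{-n}:n\in\mathbb{N}\}$, for each $i=1,\dots,k-2$ one has $\alpha_1\phi^{-i}+\alpha_2\phi^{-i}+\alpha_3\phi^{-i+1}+\cdots+\alpha_{i+1}\phi^{-1}\in\Lambda$, and $\alpha_1\phi^{-k+1}+\alpha_2\phi^{-k+1}+\alpha_3\phi^{-k+2}+\cdots+\alpha_k\phi^{-1}\in\{\pm\beta\phi^{-m}:m\in\mathbb{N}\}$.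 Connectedness $\sim$ is an equivalence relation on $\Lambda$; $\Lambda_\alpha:=\{\beta\in\Lambda:\beta\sim\alpha\}$. Define $H_{\Lambda_\alpha}:=\mathrm{span}_{\mathbb{K}}\{[L_\beta,L_{-\beta}]:\beta\in\Lambda_\alpha\}\subset H$, $V_{\Lambda_\alpha}:=\bigoplus_{\beta\in\Lambda_\alpha}L_\beta$, and $L_{\Lambda_\alpha}:=H_{\Lambda_\alpha}\oplus V_{\Lambda_\alpha}$. *)

From HB Require Import structures.
From mathcomp Require Import all_boot all_order all_algebra.
From Stdlib Require Import ClassicalEpsilon.
Set Implicit Arguments. Unset Strict Implicit. Unset Printing Implicit Defensive.
Import Order.TTheory GRing.Theory Num.Theory.
Local Open Scope ring_scope.

Fixpoint allP (T : Type) (P : T -> Prop) (s : seq T) : Prop :=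
  match s with nil => True | x :: s' => P x /\ allP P s' end.

Section HomLieColor.
Variables (K : fieldType) (G : zmodType) (L : lmodType K).

Definition subspace (S : L -> Prop) : Prop :=
  S 0 /\ (forall (a : K) x y, S x -> S y -> S (a *: x + y)).

Definition span (S : L -> Prop) (x : L) : Prop :=
  exists s : seq (K * L), allP (fun p => S p.2) s /\ x = \sum_(p <- s) p.1 *: p.2.

Variable Lg : G -> L -> Prop.

Definition graded_space : Prop :=
  (forall g, subspace (Lg g)) /\
  (forall x, exists s : seq (G * L),
      uniq (map fst s) /\ allP (fun p => Lg p.1 p.2) s /\ x = \sum_(p <- s) p.2) /\
  (forall s : seq (G * L),
      uniq (map fst s) -> allP (fun p => Lg p.1 p.2) s -> \sum_(p <- s) p.2 = 0 ->
      allP (fun p => p.2 = 0) s).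

Definition graded_sub (A : L -> Prop) : Prop :=
  subspace A /\
  (forall x, A x -> exists s : seq (G * L),
      uniq (map fst s) /\ allP (fun p => Lg p.1 p.2 /\ A p.2) s /\ x = \sum_(p <- s) p.2).

Definition bicharacter (eps : G -> G -> K) : Prop :=
  (forall a b, eps a b != 0) /\
  (forall a b, eps a b * eps b a = 1) /\
  (forall a b c, eps a (b + c) = eps a b * eps a c) /\
  (forall a b c, eps (a + b) c = eps a c * eps b c).

Variables (br : L -> L -> L) (phi : L -> L) (eps : G -> G -> K).

Definition hom_lie_color : Prop :=
  bicharacter eps /\ graded_space /\
  (forall (a : K) x y z, br (a *: x + y) z = a *: br x z + br y z) /\
  (forall (a : K) x y z, br z (a *: x + y) = a *: br z x + br z y) /\
  (forall (a : K) x y, phi (a *: x + y) = a *: phi x + phi y) /\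
  (forall g h x y, Lg g x -> Lg h y -> Lg (g + h) (br x y)) /\
  (forall g x, Lg g x -> Lg g (phi x)) /\
  (forall x y, phi (br x y) = br (phi x) (phi y)) /\
  (forall g h x y, Lg g x -> Lg h y -> br x y = - (eps g h *: br y x)) /\
  (forall g h k x y z, Lg g x -> Lg h y -> Lg k z ->
      eps k g *: br (phi x) (br y z) + eps g h *: br (phi y) (br z x)
      + eps h k *: br (phi z) (br x y) = 0).

Definition regular : Prop := bijective phi.

Definition phi_stable (A : L -> Prop) : Prop :=
  (forall x, A x -> A (phi x)) /\ (forall y, A y -> exists x, A x /\ phi x = y).

Definition subalgebra (A : L -> Prop) : Prop :=
  graded_sub A /\ (forall x y, A x -> A y -> A (br x y)) /\ phi_stable A.

Definition abelian (A : L -> Prop) : Prop := forall x y, A x -> A y -> br x y = 0.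

Definition ideal (I : L -> Prop) : Prop :=
  graded_sub I /\ (forall x y, I x -> I (br x y)) /\ phi_stable I.

Definition simple : Prop :=
  (exists x y, br x y != 0) /\
  (forall I, ideal I -> (forall x, I x -> x = 0) \/ (forall x, I x)).

Variable H : L -> Prop.

Definition max_abelian_graded_subalgebra : Prop :=
  subalgebra H /\ abelian H /\
  (forall A, subalgebra A -> abelian A -> (forall x, H x -> A x) -> forall x, A x -> H x).

Definition H0 (x : L) : Prop := H x /\ Lg 0 x.

(* Linear forms on H_0 are represented by functions L -> K; only their values
   on H_0 matter. *)
Definition eqH0 (a b : L -> K) : Prop := forall h, H0 h -> a h = b h.

Definition linear_on_H0 (a : L -> K) : Prop :=
  forall (c : K) h1 h2, H0 h1 -> H0 h2 -> a (c *: h1 + h2) = c * a h1 + a h2.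

Definition Lroot (a : L -> K) (v : L) : Prop :=
  forall h, H0 h -> br h v = a h *: phi v.

Definition is_root (a : L -> K) : Prop :=
  linear_on_H0 a /\ (exists h, H0 h /\ a h != 0) /\ (exists v, v != 0 /\ Lroot a v).

Definition oppf (a : L -> K) : L -> K := fun h => - a h.

Definition is_split : Prop :=
  forall x, exists (h : L) (s : seq ((L -> K) * L)),
    H h /\ allP (fun p => is_root p.1 /\ Lroot p.1 p.2) s /\ x = h + \sum_(p <- s) p.2.

Definition symmetric_roots : Prop := forall a, is_root a -> is_root (oppf a).

(* the inverse map phi^{-1} (equal to the inverse of phi when phi is bijective) *)
Definition phiinv (y : L) : L := epsilon (inhabits (0 : L)) (fun x => phi x = y).

Definition aphim (a : L -> K) (n : nat) : L -> K := fun h => a (iter n phiinv h).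

Definition in_orbit (a b : L -> K) : Prop := exists n : nat, eqH0 b (aphim a n).

Definition in_pm_orbit (a b : L -> K) : Prop :=
  exists m : nat, eqH0 b (aphim a m) \/ eqH0 b (oppf (aphim a m)).

Definition dflt : L -> K := fun _ => 0.

(* With s = [:: alpha_1; ...; alpha_k] (0-indexed in Rocq),
   Ssum s i = alpha_1 phi^{-i} + alpha_2 phi^{-i} + alpha_3 phi^{-i+1} + ...
              + alpha_{i+1} phi^{-1};   Ssum s 0 = alpha_1. *)
Definition Ssum (s : seq (L -> K)) (i : nat) : L -> K := fun h =>
  nth dflt s 0 (iter i phiinv h)
  + \sum_(1 <= j < i.+1) nth dflt s j (iter (i.+1 - j) phiinv h).

Definition connected (a b : L -> K) : Prop :=
  exists s : seq (L -> K),
    (0 < size s)%N /\ allP is_root s /\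
    in_orbit a (nth dflt s 0) /\
    (forall i : nat, (1 <= i)%N -> (i <= size s - 2)%N -> is_root (Ssum s i)) /\
    in_pm_orbit b (Ssum s (size s - 1)).

Definition H_La (a : L -> K) : L -> Prop :=
  span (fun x => exists b u v, is_root b /\ connected a b /\
                   Lroot b u /\ Lroot (oppf b) v /\ x = br u v).

Definition V_La (a : L -> K) (x : L) : Prop :=
  exists s : seq ((L -> K) * L),
    allP (fun p => is_root p.1 /\ connected a p.1 /\ Lroot p.1 p.2) s /\
    x = \sum_(p <- s) p.2.

Definition L_La (a : L -> K) (x : L) : Prop :=
  exists h v, H_La a h /\ V_La a v /\ x = h + v.

Definition H_all : L -> Prop :=
  span (fun x => exists b u v, is_root b /\ Lroot b u /\ Lroot (oppf b) v /\ x = br u v).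

End HomLieColor.

From Pilot Require Import Defs.
From HB Require Import structures.
From mathcomp Require Import all_boot all_order all_algebra.
From mathcomp Require Import zify.
From Stdlib Require Import ClassicalEpsilon Classical.
Import Pilot.Defs.
Set Implicit Arguments. Unset Strict Implicit. Unset Printing Implicit Defensive.
Import Order.TTheory GRing.Theory Num.Theory.
Local Open Scope ring_scope.

(* Elements of H_0 act on a root space by [h, v] = b(h) phi(v), so the Jacobi identity
   gives [L_b, L_c] <= L_{(b + c) phi^-1} and phi(L_b) = L_{b phi^-1}.  Root spaces of
   distinct weights are independent (evaluate a relation at some h0 separating two of the
   weights and induct on its length); with splitness this gives L_0 = H.  Bracketing
   L_{Lambda_a} with H or with a root space L_c therefore produces either elements of
   H_{Lambda_a} or root vectors whose weight prolongs a connection from a; for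
   [[L_b, L_-b], L_c] the Jacobi identity reduces to a bracket of L_{+-b} with L_{c phi}.
   So L_{Lambda_a} is a graded phi-stable ideal.  If L is simple it is all of L, and
   independence of root spaces forces every root to be connected to a and H to be
   H_{Lambda_a}, a subspace of the span of the [L_b, L_-b]. *)

Section AllP.
Variable T : Type.
Implicit Types (P Q : T -> Prop) (s t : seq T).

Lemma allP_In P s : allP P s <-> (forall x, List.In x s -> P x).
Proof.
elim: s => [|x s IH] /=; first by split.
split; first by case=> Px /IH Ps y [<-|/Ps].
by move=> Ps; split; [apply: Ps; left|apply/IH => y sy; apply: Ps; right].
Qed.

Lemma allP_cat P s t : allP P s -> allP P t -> allP P (s ++ t).
Proof. by elim: s => [|x s IH] //= [Px Ps] Pt; split=> //; apply: IH. Qed.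

Lemma sub_allP P Q s : (forall x, P x -> Q x) -> allP P s -> allP Q s.
Proof. by move=> PQ; elim: s => [|x s IH] //= [Px Ps]; split; [apply: PQ|apply: IH]. Qed.

Lemma allP_map (U : Type) (f : U -> T) P (s : seq U) :
  allP (fun x => P (f x)) s -> allP P (map f s).
Proof. by elim: s => [|x s IH] //= [Px Ps]; split=> //; apply: IH. Qed.

End AllP.

Lemma eq_big_allP (R : nmodType) (I : Type) (s : seq I) (F1 F2 : I -> R) :
  allP (fun i => F1 i = F2 i) s -> \sum_(i <- s) F1 i = \sum_(i <- s) F2 i.
Proof. by elim: s => [|i s IH] /=; [rewrite !big_nil|case=> E /IH; rewrite !big_cons E => ->]. Qed.

Section Subspaces.
Variables (K : fieldType) (V : lmodType K).

Section Closure.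
Variables (P : V -> Prop) (sP : subspace P).

Lemma subspace0 : P 0. Proof. by case: sP. Qed.

Lemma subspaceD x y : P x -> P y -> P (x + y).
Proof. by case: sP => _ PD Px Py; have := PD 1 x y Px Py; rewrite scale1r. Qed.

Lemma subspaceZ c x : P x -> P (c *: x).
Proof. by case: sP => P0 PD Px; have := PD c x 0 Px P0; rewrite addr0. Qed.

Lemma subspaceN x : P x -> P (- x).
Proof. by rewrite -scaleN1r; apply: subspaceZ. Qed.

Lemma subspaceB x y : P x -> P y -> P (x - y).
Proof. by move=> Px Py; apply: subspaceD => //; apply: subspaceN. Qed.

Lemma subspace_sum (I : Type) (s : seq I) (F : I -> V) :
  allP (fun i => P (F i)) s -> P (\sum_(i <- s) F i).
Proof.
elim: s => [|i s IH] /=; first by rewrite big_nil => _; apply: subspace0.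
by case=> Pi Ps; rewrite big_cons; apply: subspaceD => //; apply: IH.
Qed.

End Closure.

Lemma subspace_preim (W : lmodType K) (f : V -> W) (P : W -> Prop) :
  (forall a x y, f (a *: x + y) = a *: f x + f y) ->
  subspace P -> subspace (fun x => P (f x)).
Proof.
move=> fl [P0 PD]; split=> [|a x y Px Py]; last by rewrite fl; apply: PD.
by have := fl (-1) 0 0; rewrite scaler0 addr0 scaleN1r addNr => ->.
Qed.

Lemma span_subspace (S : V -> Prop) : subspace (span S).
Proof.
split=> [|c x y [s [Ss ->]] [t [St ->]]]; first by exists [::]; rewrite big_nil.
exists (map (fun p => (c * p.1, p.2)) s ++ t); split.
  by apply: allP_cat => //; apply: allP_map.
rewrite big_cat big_map scaler_sumr; congr (_ + _).
by apply: eq_bigr => p _; rewrite scalerA.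
Qed.

Lemma span_mem (S : V -> Prop) x : S x -> span S x.
Proof. by exists [:: (1, x)]; rewrite big_seq1 scale1r. Qed.

Lemma span_min (S P : V -> Prop) : subspace P -> (forall x, S x -> P x) ->
  forall x, span S x -> P x.
Proof.
move=> sP SP x [s [Ss ->]]; apply: (subspace_sum sP).
by apply: sub_allP Ss => p /SP; apply: subspaceZ.
Qed.

Lemma span_mono (S1 S2 : V -> Prop) : (forall x, S1 x -> S2 x) ->
  forall x, span S1 x -> span S2 x.
Proof. by move=> S12; apply: span_min (span_subspace S2) _ => x /S12 /span_mem. Qed.

End Subspaces.

Section GradedSpace.
Variables (K : fieldType) (G : zmodType) (L : lmodType K) (Lg : G -> L -> Prop).

Fixpoint add_component (p : G * L) (t : seq (G * L)) : seq (G * L) :=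
  if t is q :: t' then
    if q.1 == p.1 then (q.1, p.2 + q.2) :: t' else q :: add_component p t'
  else [:: p].

Lemma add_component_sum p t :
  \sum_(q <- add_component p t) q.2 = p.2 + \sum_(q <- t) q.2.
Proof.
elim: t => [|q t IH] /=; first by rewrite big_seq1 big_nil addr0.
case: ifP => _; rewrite !big_cons /=; first by rewrite addrA.
by rewrite IH addrCA.
Qed.

Lemma add_component_mem p t g :
  (g \in map fst (add_component p t)) = (g == p.1) || (g \in map fst t).
Proof.
elim: t => [|q t IH] /=; first by rewrite !inE orbF.
case: ifP => [/eqP E|_] /=; rewrite !inE; first by rewrite -E orbA orbb.
by rewrite IH orbCA.
Qed.

Lemma add_component_uniq p t : uniq (map fst t) -> uniq (map fst (add_component p t)).
Proof.
elim: t => [|q t IH] //=; case: ifP => //= qp /andP [qt ut].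
by rewrite IH // andbT add_component_mem negb_or qt qp.
Qed.

Lemma add_component_allP (P : G -> L -> Prop) p t :
  (forall g x y, P g x -> P g y -> P g (x + y)) -> P p.1 p.2 ->
  allP (fun q => P q.1 q.2) t -> allP (fun q => P q.1 q.2) (add_component p t).
Proof.
move=> PD Pp; elim: t => [|q t IH] //= [Pq Pt].
case: ifP => /= [/eqP qp|_]; split=> //; last exact: IH.
by rewrite qp; apply: PD => //; rewrite -qp.
Qed.

Lemma add_component_In p t q :
  List.In q t -> q.1 != p.1 -> List.In q (add_component p t).
Proof.
elim: t => [|r t IH] //= tq qp; case: ifP => rp /=.
  by case: tq => [rq|]; [rewrite -rq rp in qp|right].
by case: tq => [->|tq]; [left|right; apply: IH].
Qed.

Lemma merge_components (P : G -> L -> Prop) (s : seq (G * L)) :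
  (forall g x y, P g x -> P g y -> P g (x + y)) ->
  allP (fun q => P q.1 q.2) s ->
  exists s', [/\ uniq (map fst s'), allP (fun q => P q.1 q.2) s' &
                 \sum_(q <- s') q.2 = \sum_(q <- s) q.2].
Proof.
move=> PD; elim: s => [|p s IH] /=; first by exists [::].
case=> Pp /IH [s' [us' Ps' Es']]; exists (add_component p s'); split.
- exact: add_component_uniq.
- exact: add_component_allP.
- by rewrite add_component_sum Es' big_cons.
Qed.

Definition homogeneous_sum (A : L -> Prop) (x : L) : Prop :=
  exists s : seq (G * L), allP (fun p => Lg p.1 p.2 /\ A p.2) s /\ x = \sum_(p <- s) p.2.

Hypothesis gL : graded_space Lg.

Lemma Lg_subspace g : subspace (Lg g). Proof. by case: gL. Qed.

Lemma Lg_decomposition x : exists s : seq (G * L),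
  [/\ uniq (map fst s), allP (fun p => Lg p.1 p.2) s & x = \sum_(p <- s) p.2].
Proof. by case: gL => _ [dec _]; have [s [? [? ?]]] := dec x; exists s. Qed.

Lemma Lg_independent (s : seq (G * L)) :
  uniq (map fst s) -> allP (fun p => Lg p.1 p.2) s -> \sum_(p <- s) p.2 = 0 ->
  allP (fun p => p.2 = 0) s.
Proof. by case: gL => _ [_]; apply. Qed.

Lemma homogeneous_sum_subspace A : subspace A -> subspace (homogeneous_sum A).
Proof.
move=> sA; split=> [|c x y [s [As ->]] [t [At ->]]]; first by exists [::]; rewrite big_nil.
exists (map (fun p => (p.1, c *: p.2)) s ++ t).
split; last by rewrite big_cat big_map scaler_sumr.
apply: allP_cat => //; apply: allP_map; apply: sub_allP As => p [Gp Ap].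
by split; [apply: (subspaceZ (Lg_subspace _))|apply: (subspaceZ sA)].
Qed.

Lemma graded_subP A : subspace A -> (forall x, A x -> homogeneous_sum A x) ->
  graded_sub Lg A.
Proof.
move=> sA decA; split=> // x /decA [s [As ->]].
have AD g x1 x2 : Lg g x1 /\ A x1 -> Lg g x2 /\ A x2 -> Lg g (x1 + x2) /\ A (x1 + x2).
  by move=> [G1 A1] [G2 A2]; split; [apply: (subspaceD (Lg_subspace _))|apply: (subspaceD sA)].
by have [s' [us' As' <-]] := merge_components AD As; exists s'.
Qed.

Lemma homogeneous_kernel (D : L -> L) : {morph D : x y / x + y} ->
  (forall g x, Lg g x -> Lg g (D x)) ->
  forall s : seq (G * L), uniq (map fst s) -> allP (fun p => Lg p.1 p.2) s ->
  D (\sum_(p <- s) p.2) = 0 -> allP (fun p => D p.2 = 0) s.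
Proof.
move=> DD DLg s us Gs Ds0.
have D0 : D 0 = 0 by apply: (addrI (D 0)); rewrite -DD !addr0.
set t := map (fun p => (p.1, D p.2)) s.
have ut : uniq (map fst t) by rewrite -map_comp (eq_map (g := fst)).
have Gt : allP (fun q => Lg q.1 q.2) t by apply: allP_map; apply: sub_allP Gs => p /DLg.
have St : \sum_(q <- t) q.2 = 0 by rewrite big_map -(big_morph D DD D0).
have /allP_In t0 := Lg_independent ut Gt St.
by apply/allP_In => p sp; apply: (t0 (p.1, D p.2)); apply/List.in_map_iff; exists p.
Qed.

Lemma Lg_of_injective (f : L -> L) : {morph f : x y / x + y} -> injective f ->
  (forall g x, Lg g x -> Lg g (f x)) -> forall g x, Lg g (f x) -> Lg g x.
Proof.
move=> fD finj fLg g x Gfx.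
have f0 : f 0 = 0 by apply: (addrI (f 0)); rewrite -fD !addr0.
have [s [us Gs Ex]] := Lg_decomposition x; rewrite Ex in Gfx *.
set t := add_component (g, - f (\sum_(p <- s) p.2)) (map (fun p => (p.1, f p.2)) s).
have ut : uniq (map fst t).
  by apply: add_component_uniq; rewrite -map_comp (eq_map (g := fst)).
have Gt : allP (fun q => Lg q.1 q.2) t.
  apply: (add_component_allP (P := Lg)) => /=.
  - by move=> ? ? ?; apply: (subspaceD (Lg_subspace _)).
  - exact: (subspaceN (Lg_subspace _)).
  - by apply: allP_map; apply: sub_allP Gs => p /fLg.
have St : \sum_(q <- t) q.2 = 0.
  by rewrite add_component_sum big_map -(big_morph f fD f0) addNr.
have /allP_In t0 := Lg_independent ut Gt St.
apply: (subspace_sum (Lg_subspace g)); apply/allP_In => p sp.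
have [<-|pg] := eqVneq p.1 g; first by move/allP_In: Gs; apply.
have /t0 /= fp0 : List.In (p.1, f p.2) t.
  by apply: add_component_In => //; apply/List.in_map_iff; exists p.
have -> : p.2 = 0 by apply: finj; rewrite fp0 f0.
exact: (subspace0 (Lg_subspace g)).
Qed.

End GradedSpace.

Section HomLieColorAlgebra.
Variables (K : fieldType) (G : zmodType) (L : lmodType K).
Variables (Lg : G -> L -> Prop) (br : L -> L -> L) (phi : L -> L) (eps : G -> G -> K)
  (H : L -> Prop).
Hypothesis hl : hom_lie_color Lg br phi eps.

Lemma eps_neq0 a b : eps a b != 0. Proof. by case: hl => [[]]. Qed.

Lemma eps_swap a b : eps a b * eps b a = 1. Proof. by case: hl => [[_ []]]. Qed.

Lemma eps0g c : eps 0 c = 1.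
Proof.
case: hl => [[_ [_ [_ epsDl]]] _]; apply: (mulfI (eps_neq0 0 c)).
by rewrite mulr1 -epsDl addr0.
Qed.

Lemma epsg0 c : eps c 0 = 1.
Proof.
case: hl => [[_ [_ [epsDr _]]] _]; apply: (mulfI (eps_neq0 c 0)).
by rewrite mulr1 -epsDr addr0.
Qed.

Lemma Lg_graded : graded_space Lg. Proof. by case: hl => [_ []]. Qed.

Lemma brDZl z a x y : br (a *: x + y) z = a *: br x z + br y z.
Proof. by case: hl => [_ [_ [brl _]]]. Qed.

Lemma brDZr z a x y : br z (a *: x + y) = a *: br z x + br z y.
Proof. by case: hl => [_ [_ [_ [brr _]]]]. Qed.

Lemma phiDZ a x y : phi (a *: x + y) = a *: phi x + phi y.
Proof. by case: hl => [_ [_ [_ [_ [phil _]]]]]. Qed.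

Lemma Lg_br g h x y : Lg g x -> Lg h y -> Lg (g + h) (br x y).
Proof. by case: hl => [_ [_ [_ [_ [_ [brg _]]]]]]; apply: brg. Qed.

Lemma Lg_phi g x : Lg g x -> Lg g (phi x).
Proof. by case: hl => [_ [_ [_ [_ [_ [_ [phig _]]]]]]]; apply: phig. Qed.

Lemma phi_br x y : phi (br x y) = br (phi x) (phi y).
Proof. by case: hl => [_ [_ [_ [_ [_ [_ [_ [phib _]]]]]]]]. Qed.

Lemma br_skew g h x y : Lg g x -> Lg h y -> br x y = - (eps g h *: br y x).
Proof. by case: hl => [_ [_ [_ [_ [_ [_ [_ [_ [skew _]]]]]]]]]; apply: skew. Qed.

Lemma br_jacobi g h k x y z : Lg g x -> Lg h y -> Lg k z ->
  eps k g *: br (phi x) (br y z) + eps g h *: br (phi y) (br z x)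
  + eps h k *: br (phi z) (br x y) = 0.
Proof. by case: hl => [_ [_ [_ [_ [_ [_ [_ [_ [_ jacobi]]]]]]]]]; apply: jacobi. Qed.

Lemma br0r z : br z 0 = 0.
Proof. by have := brDZr z (-1) 0 0; rewrite scaler0 addr0 scaleN1r addNr. Qed.

Lemma br0l z : br 0 z = 0.
Proof. by have := brDZl z (-1) 0 0; rewrite scaler0 addr0 scaleN1r addNr. Qed.

Lemma brDr z : {morph br z : x y / x + y}.
Proof. by move=> x y; have := brDZr z 1 x y; rewrite !scale1r. Qed.

Lemma brDl z : {morph br^~ z : x y / x + y}.
Proof. by move=> x y; have := brDZl z 1 x y; rewrite !scale1r. Qed.

Lemma brZr z a x : br z (a *: x) = a *: br z x.
Proof. by have := brDZr z a x 0; rewrite !addr0 br0r addr0. Qed.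

Lemma brNr z x : br z (- x) = - br z x.
Proof. by rewrite -scaleN1r brZr scaleN1r. Qed.

Lemma phi0 : phi 0 = 0.
Proof. by have := phiDZ (-1) 0 0; rewrite scaler0 addr0 scaleN1r addNr. Qed.

Lemma phiD : {morph phi : x y / x + y}.
Proof. by move=> x y; have := phiDZ 1 x y; rewrite !scale1r. Qed.

Lemma phiZ a x : phi (a *: x) = a *: phi x.
Proof. by have := phiDZ a x 0; rewrite !addr0 phi0 addr0. Qed.

Lemma br_suml z (I : Type) (s : seq I) (F : I -> L) :
  br (\sum_(i <- s) F i) z = \sum_(i <- s) br (F i) z.
Proof. exact: (big_morph _ (brDl z) (br0l z)). Qed.

Lemma br_sumr z (I : Type) (s : seq I) (F : I -> L) :
  br z (\sum_(i <- s) F i) = \sum_(i <- s) br z (F i).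
Proof. exact: (big_morph _ (brDr z) (br0r z)). Qed.

Lemma phi_sum (I : Type) (s : seq I) (F : I -> L) :
  phi (\sum_(i <- s) F i) = \sum_(i <- s) phi (F i).
Proof. exact: (big_morph _ phiD phi0). Qed.

Hypothesis reg : regular phi.

Local Notation phiV := (phiinv phi).

Lemma phi_inj : injective phi. Proof. by case: reg => g phiK _; apply: can_inj phiK. Qed.

Lemma phiVK : cancel phiV phi.
Proof.
move=> y; apply: (epsilon_spec (inhabits 0) (fun x => phi x = y)).
by case: reg => g _ gK; exists (g y).
Qed.

Lemma phiK : cancel phi phiV. Proof. by move=> x; apply: phi_inj; rewrite phiVK. Qed.

Lemma phiVDZ a x y : phiV (a *: x + y) = a *: phiV x + phiV y.
Proof. by apply: phi_inj; rewrite phiDZ !phiVK. Qed.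

Lemma phiV_br x y : phiV (br x y) = br (phiV x) (phiV y).
Proof. by apply: phi_inj; rewrite phi_br !phiVK. Qed.

Lemma Lg_phiV g y : Lg g y -> Lg g (phiV y).
Proof.
move=> Gy; apply: (Lg_of_injective Lg_graded phiD phi_inj Lg_phi).
by rewrite phiVK.
Qed.

Lemma iter_phiV n h : iter n phiV (phiV h) = phiV (iter n phiV h).
Proof. by rewrite -iterSr iterS. Qed.

Hypothesis mag : max_abelian_graded_subalgebra Lg br phi H.

Local Notation H0h := (H0 Lg H).
Local Notation eqH := (eqH0 Lg H).
Local Notation Lr := (Lroot Lg br phi H).
Local Notation root := (is_root Lg br phi H).
Local Notation conn := (connected Lg br phi H).
Local Notation zero_form := (@dflt K L).
(* [formV b], [formF b] and [br_weight b c] are the paper's [b phi^-1], [b phi] and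
   [(b + c) phi^-1]; the last is the weight of [[L_b, L_c]]. *)
Local Notation formV b := (aphim phi b 1).

Definition formF (b : L -> K) : L -> K := fun h => b (phi h).

Definition br_weight (b c : L -> K) : L -> K := fun h => b (phiV h) + c (phiV h).

Lemma H_subspace : subspace H. Proof. by case: mag => [[[]]]. Qed.

Lemma H_abelian x y : H x -> H y -> br x y = 0.
Proof. by case: mag => [_ [ab _]]; apply: ab. Qed.

Lemma H_phi x : H x -> H (phi x). Proof. by case: mag => [[_ [_ [Hphi _]]] _]; apply: Hphi. Qed.

Lemma H_phiV y : H y -> H (phiV y).
Proof. by case: mag => [[_ [_ [_ Hsurj]]] _] /Hsurj [x [Hx <-]]; rewrite phiK. Qed.

Lemma H0_phi h : H0h h -> H0h (phi h).
Proof. by case=> Hh Gh; split; [apply: H_phi|apply: Lg_phi]. Qed.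

Lemma H0_phiV h : H0h h -> H0h (phiV h).
Proof. by case=> Hh Gh; split; [apply: H_phiV|apply: Lg_phiV]. Qed.

Lemma H0_iter_phiV n h : H0h h -> H0h (iter n phiV h).
Proof. by elim: n => [|n IH] //= /IH; apply: H0_phiV. Qed.

Lemma H0DZ a h1 h2 : H0h h1 -> H0h h2 -> H0h (a *: h1 + h2).
Proof.
case=> H1 G1 [H2 G2]; split; first by case: H_subspace => _; apply.
by case: (Lg_subspace Lg_graded 0) => _; apply.
Qed.

Lemma Lroot_subspace b : subspace (Lr b).
Proof.
split=> [h _|a x y Lx Ly h Hh]; first by rewrite br0r phi0 scaler0.
by rewrite brDZr Lx // Ly // phiDZ scalerDr !scalerA mulrC.
Qed.

Lemma Lroot_eqH b c v : eqH b c -> Lr b v -> Lr c v.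
Proof. by move=> bc Lv h Hh; rewrite -bc // Lv. Qed.

Lemma Lroot0_of_H x : H x -> Lr zero_form x.
Proof. by move=> Hx h [Hh _]; rewrite H_abelian ?scale0r. Qed.

Lemma Lroot_phi b v : Lr b v -> Lr (formV b) (phi v).
Proof.
move=> Lv h Hh; rewrite /aphim /= -{1}(phiVK h) -phi_br Lv ?phiZ //.
exact: H0_phiV.
Qed.

Lemma Lroot_phiV b v : Lr b v -> Lr (formF b) (phiV v).
Proof.
move=> Lv h Hh; apply: phi_inj; rewrite phi_br phiVK Lv; last exact: H0_phi.
by rewrite phiZ.
Qed.

Lemma Lroot_homogeneous b y : Lr b y -> homogeneous_sum Lg (Lr b) y.
Proof.
move=> Ly; have [s [us Gs Ey]] := Lg_decomposition Lg_graded y.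
exists s; split=> //; apply/allP_In => p sp; split; first by move/allP_In: Gs; apply.
move=> h Hh; pose D v := br h v - b h *: phi v.
have DD : {morph D : u w / u + w}.
  by move=> u w; rewrite /D brDr phiD scalerDr opprD addrACA.
have DLg g x : Lg g x -> Lg g (D x).
  move=> Gx; apply: (subspaceB (Lg_subspace Lg_graded g)).
    by rewrite -(add0r g); apply: Lg_br => //; case: Hh.
  by apply: (subspaceZ (Lg_subspace Lg_graded g)); apply: Lg_phi.
have Dy : D (\sum_(q <- s) q.2) = 0 by rewrite /D -Ey Ly // subrr.
have /allP_In /(_ p sp) /eqP := homogeneous_kernel Lg_graded DD DLg us Gs Dy.
by rewrite subr_eq0 => /eqP.
Qed.

Lemma Lroot_ind (P : L -> Prop) b : subspace P ->
  (forall g y, Lg g y -> Lr b y -> P y) -> forall y, Lr b y -> P y.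
Proof.
move=> sP HP y /Lroot_homogeneous [s [Ls ->]].
by apply: (subspace_sum sP); apply: sub_allP Ls => p [Gp Lp]; apply: HP Gp Lp.
Qed.

Lemma Lroot_br_ind (P : L -> Prop) b c : subspace P ->
  (forall g g' x y, Lg g x -> Lg g' y -> Lr b x -> Lr c y -> P (br x y)) ->
  forall x y, Lr b x -> Lr c y -> P (br x y).
Proof.
move=> sP HP x y Lx Ly.
apply: (Lroot_ind (subspace_preim (brDZl y) sP) _ Lx) => g x' Gx Lx'.
apply: (Lroot_ind (subspace_preim (brDZr x') sP) _ Ly) => g' y' Gy Ly'.
exact: HP Gx Gy Lx' Ly'.
Qed.

(* The Jacobi identity with [phi^-1 h] as first argument. *)
Lemma Lroot_br b c v w : Lr b v -> Lr c w -> Lr (br_weight b c) (br v w).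
Proof.
apply: Lroot_br_ind; first exact: Lroot_subspace.
move=> g g' x y Gx Gy Lx Ly h Hh.
have Hh' := H0_phiV Hh; have [_ Gh'] := Hh'.
have J := br_jacobi Gh' Gx Gy.
rewrite eps0g epsg0 !scale1r (br_skew Gy Gh') epsg0 scale1r (Ly _ Hh') (Lx _ Hh') in J.
rewrite brNr !brZr (br_skew (Lg_phi Gy) (Lg_phi Gx)) phiVK in J.
rewrite !scalerN !scalerA mulrAC eps_swap mul1r in J.
rewrite phi_br /br_weight.
by apply/eqP; rewrite -subr_eq0 scalerDl opprD addrA addrAC J.
Qed.

Lemma Lroot_sum_weighted (s : seq ((L -> K) * L)) h :
  allP (fun p => Lr p.1 p.2) s -> \sum_(p <- s) p.2 = 0 -> H0h h ->
  \sum_(p <- s) p.1 h *: p.2 = 0.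
Proof.
move=> Ls s0 Hh; apply: phi_inj.
have E : br h (\sum_(p <- s) p.2) = 0 by rewrite s0 br0r.
rewrite phi0 -[RHS]E phi_sum br_sumr.
by apply: eq_big_allP; apply: sub_allP Ls => p Lp; rewrite phiZ Lp.
Qed.

Lemma Lroot_independent s b x : Lr b x ->
  allP (fun p => Lr p.1 p.2 /\ ~ eqH b p.1) s -> x + \sum_(p <- s) p.2 = 0 -> x = 0.
Proof.
have [n] := ubnP (size s); elim: n s b x => // n IH [|[c y] t] b x /=.
  by move=> _ _ _; rewrite big_nil addr0.
rewrite ltnS => sz_t Lx [[Ly bc] Lt]; rewrite big_cons /= => s0.
have [h0 [Hh0 bc0]] : exists h0, H0h h0 /\ b h0 <> c h0.
  apply: NNPP => nbc; apply: bc => h Hh; apply: NNPP => bch; apply: nbc; by exists h.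
have Lt' : allP (fun p => Lr p.1 p.2) t by apply: sub_allP Lt => p [].
have w0 : b h0 *: x + (c h0 *: y + \sum_(p <- t) p.1 h0 *: p.2) = 0.
  by have := @Lroot_sum_weighted ((b, x) :: (c, y) :: t) h0; rewrite !big_cons; apply.
(* Subtracting [c h0] times the relation from its [h0]-weighted form removes [y]. *)
have : (b h0 - c h0) *: x = 0.
  apply: (IH (map (fun p => (p.1, (p.1 h0 - c h0) *: p.2)) t) b) => //.
  - by rewrite size_map.
  - exact: (subspaceZ (Lroot_subspace b)).
  - apply: allP_map; apply: sub_allP Lt => p [Lp bp]; split => //.
    exact: (subspaceZ (Lroot_subspace p.1)).
  rewrite big_map /=; under eq_bigr do rewrite scalerBl.
  rewrite sumrB -scaler_sumr.
  have -> : \sum_(p <- t) p.1 h0 *: p.2 = - (b h0 *: x + c h0 *: y).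
    by apply/eqP; rewrite -addr_eq0 addrC -addrA w0.
  have -> : \sum_(p <- t) p.2 = - (x + y).
    by apply/eqP; rewrite -addr_eq0 addrC -addrA s0.
  rewrite scalerN opprK scalerDr scalerBl.
  move: (b h0 *: x) (c h0 *: x) (c h0 *: y) => u v w.
  by rewrite opprD (addrC v w) [- u - w + _]addrA subrK addrACA subrr addNr addr0.
by move/eqP; rewrite scaler_eq0 subr_eq0 => /orP [/eqP|/eqP].
Qed.

Lemma root_nonzero b : root b -> ~ eqH b zero_form.
Proof. by move=> [_ [[h [Hh b0]] _]] bz; move/eqP: b0; apply; rewrite bz. Qed.

Lemma Lroot0_independent x s : Lr zero_form x ->
  allP (fun p => root p.1 /\ Lr p.1 p.2) s -> x + \sum_(p <- s) p.2 = 0 -> x = 0.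
Proof.
move=> Lx Ls; apply: Lroot_independent Lx _; apply: sub_allP Ls => p [Rp Lp].
by split=> // zp; apply: (root_nonzero Rp) => h Hh; rewrite zp.
Qed.

Hypothesis spl : is_split Lg br phi H.

Lemma Lroot0_H v : Lr zero_form v -> H v.
Proof.
move=> Lv; have [h [s [Hh [Ls Ev]]]] := spl v.
suff /subr0_eq <- : h - v = 0 by [].
apply: (Lroot0_independent (s := s)) => //.
- exact: (subspaceB (Lroot_subspace _) (Lroot0_of_H Hh) Lv).
by rewrite Ev opprD addrA subrr add0r addNr.
Qed.

Hypothesis sym : symmetric_roots Lg br phi H.

Lemma root_linear b : root b -> linear_on_H0 Lg H b. Proof. by case. Qed.

Lemma root_eqH b c : eqH b c -> root b -> root c.
Proof.
move=> bc [lb [[h [Hh b0]] [v [v0 Lv]]]]; split.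
  by move=> a h1 h2 H1 H2; rewrite -!bc ?lb //; apply: H0DZ.
split; first by exists h; rewrite -bc.
by exists v; split=> //; apply: Lroot_eqH Lv.
Qed.

Lemma root_formV b : root b -> root (formV b).
Proof.
move=> [lb [[h [Hh b0]] [v [v0 Lv]]]]; split.
  by move=> a h1 h2 H1 H2; rewrite /aphim /= phiVDZ lb //; apply: H0_phiV.
split; first by exists (phi h); split; [apply: H0_phi|rewrite /aphim /= phiK].
exists (phi v); split; last exact: Lroot_phi.
by apply: contra_neq v0 => pv0; apply: phi_inj; rewrite pv0 phi0.
Qed.

Lemma root_aphim b n : root b -> root (aphim phi b n).
Proof.
move=> Rb; elim: n => [|n IH]; first by apply: root_eqH Rb.
by apply: root_eqH (root_formV IH) => h _; rewrite /aphim /= iter_phiV.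
Qed.

Lemma root_formF b : root b -> root (formF b).
Proof.
move=> [lb [[h [Hh b0]] [v [v0 Lv]]]]; split.
  by move=> a h1 h2 H1 H2; rewrite /formF phiDZ lb //; apply: H0_phi.
split; first by exists (phiV h); split; [apply: H0_phiV|rewrite /formF phiVK].
exists (phiV v); split; last exact: Lroot_phiV.
by apply: contra_neq v0 => v0; rewrite -(phiVK v) v0 phi0.
Qed.

Lemma root_signed b e : root b -> e = 1 \/ e = -1 -> root (fun h => e * b h).
Proof.
move=> Rb [->|->]; first by apply: root_eqH Rb => h _; rewrite mul1r.
by apply: root_eqH (sym Rb) => h _; rewrite mulN1r.
Qed.

Lemma br_weight_linear b c : linear_on_H0 Lg H b -> linear_on_H0 Lg H c ->
  linear_on_H0 Lg H (br_weight b c).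
Proof.
move=> lb lc a h1 h2 H1 H2; rewrite /br_weight phiVDZ.
by rewrite lb ?lc ?mulrDr 1?addrACA //; apply: H0_phiV.
Qed.

Lemma Lroot_zero_or_root d v : linear_on_H0 Lg H d -> Lr d v -> v != 0 ->
  eqH d zero_form \/ root d.
Proof.
move=> ld Lv v0; case: (classic (eqH d zero_form)) => [|dn0]; [left|right] => //.
split=> //; split; last by exists v.
apply: NNPP => nd; apply: dn0 => h Hh; apply: NNPP => dh; apply: nd.
by exists h; split=> //; apply/eqP.
Qed.

Lemma nth_formV (s : seq (L -> K)) j h :
  nth zero_form (map (fun f => formV f) s) j h = nth zero_form s j (phiV h).
Proof. by elim: s j => [|f s IH] [|j] //=. Qed.

Lemma Ssum_formV s i h :
  Ssum phi (map (fun f => formV f) s) i h = Ssum phi s i (phiV h).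
Proof.
rewrite /Ssum nth_formV -iter_phiV; congr (_ + _).
by apply: eq_bigr => j _; rewrite nth_formV iter_phiV.
Qed.

Lemma SsumS s i h :
  Ssum phi s i.+1 h = Ssum phi s i (phiV h) + nth zero_form s i.+1 (phiV h).
Proof.
rewrite /Ssum big_nat_recr //= subSnn /= -addrA -iterSr; congr (_ + (_ + _)).
by apply: eq_big_nat => j /andP [_ ji]; rewrite (subSn (ltnW ji)) iterSr.
Qed.

Lemma Ssum_rcons s c i h : (i < size s)%N -> Ssum phi (rcons s c) i h = Ssum phi s i h.
Proof.
move=> si; rewrite /Ssum nth_rcons (leq_ltn_trans _ si) //; congr (_ + _).
by apply: eq_big_nat => j /andP [_ ji]; rewrite nth_rcons (leq_trans ji si).
Qed.

Lemma connected_refl a : root a -> conn a a.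
Proof.
move=> Ra; exists [:: a]; do 3!split=> //; first by exists 0%N.
split; first by case.
by exists 0%N; left => h _; rewrite /Ssum /aphim big_geq // addr0.
Qed.

Lemma connected_eqH a b b' : eqH b b' -> conn a b -> conn a b'.
Proof.
move=> bb' [s [s0 [Rs [a1 [mid [m pm]]]]]]; exists s; do 4!split=> //.
exists m; case: pm => Em; [left|right] => h Hh;
  by rewrite Em // /aphim /oppf bb' //; apply: H0_iter_phiV.
Qed.

Lemma connected_opp a b : conn a b -> conn a (oppf b).
Proof.
move=> [s [s0 [Rs [a1 [mid [m pm]]]]]]; exists s; do 4!split=> //.
exists m; case: pm => Em; [right|left] => h Hh; rewrite Em // /aphim /oppf //.
by rewrite opprK.
Qed.

Lemma connected_formV a b : conn a b -> conn a (formV b).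
Proof.
move=> [s [s0 [Rs [[n a1] [mid [m pm]]]]]]; exists (map (fun f => formV f) s).
rewrite size_map; split=> //; split.
  by apply: allP_map; apply: sub_allP Rs => f; apply: root_formV.
split.
  exists n.+1 => h Hh; rewrite nth_formV a1; last exact: H0_phiV.
  by rewrite /aphim iterSr.
split.
  move=> i i1 i2; apply: root_eqH (root_formV (mid i i1 i2)) => h _.
  by rewrite Ssum_formV.
exists m; case: pm => Em; [left|right] => h Hh; rewrite Ssum_formV Em;
  try exact: H0_phiV; by rewrite /aphim /oppf /= iter_phiV.
Qed.

Lemma connected_formF a b : conn a b -> conn a (formF b).
Proof.
move=> [s [s0 [Rs [a1 [mid [m pm]]]]]]; exists s; do 4!split=> //.
exists m.+1; case: pm => Em; [left|right] => h Hh; rewrite Em //;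
  by rewrite /aphim /oppf /formF iterS phiVK.
Qed.

(* A chain from [a] ending at [e * b phi^-m] (with [e = 1] or [-1]) is extended by
   the root [e * c phi^-m]; its new last sum is [e * (b + c) phi^-m-1]. *)
Lemma connected_extend a b c : conn a b -> root b -> root c -> root (br_weight b c) ->
  conn a (br_weight b c).
Proof.
move=> [s [s0 [Rs [a1 [mid [m pm]]]]]] Rb Rc Rbc.
have [e [e1 Ee]] : exists e : K, (e = 1 \/ e = -1) /\
    eqH (Ssum phi s (size s - 1)) (fun h => e * aphim phi b m h).
  by case: pm => Em; [exists 1|exists (-1)]; split; auto => h Hh;
    rewrite Em // /oppf ?mul1r ?mulN1r.
move: s0 mid Ee; case Es : (size s) => [|k] // _ mid Ee; rewrite subn1 /= in Ee.
exists (rcons s (fun h => e * aphim phi c m h)); rewrite size_rcons Es; split=> //.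
split; first by rewrite -cats1; apply: allP_cat => //; split=> //;
  apply: root_signed => //; apply: root_aphim.
split; first by rewrite nth_rcons Es.
split.
  move=> i i1 i2; case: (ltnP i k) => [ik|ki].
    by apply: root_eqH (mid i i1 _) => [h _|]; rewrite ?Ssum_rcons ?Es //; lia.
  have -> : i = k by lia.
  by apply: root_eqH (root_signed (root_aphim m Rb) e1) => h Hh; rewrite Ssum_rcons ?Es ?Ee.
have Elast h : H0h h -> Ssum phi (rcons s (fun h => e * aphim phi c m h)) k.+1 h
    = e * (aphim phi b m (phiV h) + aphim phi c m (phiV h)).
  move=> Hh; rewrite SsumS Ssum_rcons ?Es // Ee; last exact: H0_phiV.
  by rewrite nth_rcons Es ltnn eqxx mulrDr.
exists m; rewrite subn1 /=.
case: e1 => Ee1; [left|right] => h Hh;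
  rewrite Elast // Ee1 /aphim /br_weight /oppf !iter_phiV ?mul1r ?mulN1r //.
Qed.


Local Notation HLa := (H_La Lg br phi H).
Local Notation VLa := (V_La Lg br phi H).
Local Notation LLa := (L_La Lg br phi H).

Lemma V_La_subspace a : subspace (VLa a).
Proof.
split=> [|c x y [s [Ls ->]] [t [Lt ->]]]; first by exists [::]; rewrite big_nil.
exists (map (fun p => (p.1, c *: p.2)) s ++ t).
split; last by rewrite big_cat big_map scaler_sumr.
apply: allP_cat => //; apply: allP_map; apply: sub_allP Ls => p [Rp [Cp Lp]].
by do 2!split=> //; apply: (subspaceZ (Lroot_subspace p.1)).
Qed.

Lemma V_La_mem a b v : root b -> conn a b -> Lr b v -> VLa a v.
Proof. by exists [:: (b, v)]; rewrite big_seq1. Qed.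

Lemma H_La_mem a b u v : root b -> conn a b -> Lr b u -> Lr (oppf b) v -> HLa a (br u v).
Proof. by move=> Rb Cb Lu Lv; apply: span_mem; exists b, u, v. Qed.

Lemma L_La_subspace a : subspace (LLa a).
Proof.
have [H0 HD] := span_subspace (fun x => exists b u v, root b /\ conn a b /\
                   Lr b u /\ Lr (oppf b) v /\ x = br u v).
have [V0 VD] := V_La_subspace a.
split=> [|c x y [h [v [Hh [Vv ->]]]] [h' [v' [Hh' [Vv' ->]]]]].
  by exists 0, 0; rewrite addr0.
exists (c *: h + h'), (c *: v + v').
by split; [exact: HD|split; [exact: VD|rewrite scalerDr addrACA]].
Qed.

Lemma L_La_of_H a x : HLa a x -> LLa a x.
Proof.
by exists x, 0; rewrite addr0; split=> //; split=> //; apply: (subspace0 (V_La_subspace a)).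
Qed.

Lemma L_La_of_V a x : VLa a x -> LLa a x.
Proof. by exists 0, x; rewrite add0r; split=> //; apply: (subspace0 (span_subspace _)). Qed.

Lemma H_of_br_opp b u v : Lr b u -> Lr (oppf b) v -> H (br u v).
Proof.
move=> Lu Lv; apply: Lroot0_H; apply: Lroot_eqH (Lroot_br Lu Lv) => h _.
by rewrite /br_weight /oppf subrr.
Qed.

Lemma H_La_H a x : HLa a x -> H x.
Proof.
move=> Hx; apply: (span_min H_subspace _ Hx) => _ [b [u [v [_ [_ [Lu [Lv ->]]]]]]].
exact: H_of_br_opp Lu Lv.
Qed.

Lemma L_La_brH a x y : LLa a x -> H y -> LLa a (br x y).
Proof.
move=> [h [v [Hh [[s [Ls ->]] ->]]]] Hy; rewrite brDl (H_abelian (H_La_H Hh) Hy) add0r.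
apply: L_La_of_V; rewrite br_suml; apply: (subspace_sum (V_La_subspace a)).
apply: sub_allP Ls => p [Rp [Cp Lp]]; apply: (V_La_mem (b := formV p.1)).
- exact: root_formV.
- exact: connected_formV.
apply: Lroot_eqH (Lroot_br Lp (Lroot0_of_H Hy)) => h0 _.
by rewrite /br_weight /aphim addr0.
Qed.

Lemma L_La_br_roots a b c v w : conn a b -> root b -> Lr b v -> root c -> Lr c w ->
  LLa a (br v w).
Proof.
move=> Cb Rb Lv Rc Lw; have [->|vw0] := eqVneq (br v w) 0.
  exact: (subspace0 (L_La_subspace a)).
have Lvw := Lroot_br Lv Lw.
have lbc := br_weight_linear (root_linear Rb) (root_linear Rc).
case: (Lroot_zero_or_root lbc Lvw vw0) => [bc0|Rbc].
  apply/L_La_of_H/(H_La_mem Rb Cb Lv)/(Lroot_eqH _ Lw) => h Hh.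
  have := bc0 _ (H0_phi Hh); rewrite /br_weight /dflt !phiK /oppf => /eqP.
  by rewrite addrC addr_eq0 => /eqP.
by apply/L_La_of_V/(V_La_mem Rbc _ Lvw)/connected_extend.
Qed.

Lemma connected_weight_step a b gm : conn a b -> root b -> root gm ->
  eqH (br_weight (oppf b) (formF gm)) zero_form \/ root (br_weight (oppf b) (formF gm)) ->
  conn a (formV gm).
Proof.
move=> Cb Rb Rg [d0|Rd].
  apply: (connected_eqH (b := formV (formV b))); last by do 2!apply: connected_formV.
  move=> h Hh; have := d0 _ (H0_phiV Hh).
  rewrite /br_weight /oppf /formF /dflt phiVK /aphim /= => /eqP.
  by rewrite addrC subr_eq0 => /eqP.
have Cd := connected_extend (connected_opp Cb) (sym Rb) (root_formF Rg) Rd.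
have E h : br_weight (br_weight (oppf b) (formF gm)) (formV b) h = formV gm h.
  by rewrite /br_weight /oppf /formF /aphim /= phiVK addrAC addNr add0r.
apply: connected_eqH (fun h _ => E h) _.
apply: connected_extend Cd Rd (root_formV Rb) _.
exact: root_eqH (fun h _ => esym (E h)) (root_formV Rg).
Qed.

Lemma br_br_eq0 g g' k u v w : Lg g u -> Lg g' v -> Lg k w ->
  br v (phiV w) = 0 -> br (phiV w) u = 0 -> br (br u v) w = 0.
Proof.
move=> Gu Gv Gw vw wu.
have := br_jacobi (Lg_phiV Gw) Gu Gv; rewrite phiVK vw wu !br0r !scaler0 !addr0.
move/eqP; rewrite scaler_eq0 (negbTE (eps_neq0 _ _)) /= => /eqP wuv.
by rewrite (br_skew (Lg_br Gu Gv) Gw) wuv scaler0 oppr0.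
Qed.

(* By the Jacobi identity one of [[v, phi^-1 w]] and [[phi^-1 w, u]] is nonzero; its
   weight is reached from [b] or [-b] in one step and then [gm phi^-1] in a second. *)
Lemma V_La_br_br_homogeneous a b gm g g' k u v w : conn a b -> root b -> root gm ->
  Lg g u -> Lg g' v -> Lg k w -> Lr b u -> Lr (oppf b) v -> Lr gm w ->
  VLa a (br (br u v) w).
Proof.
move=> Cb Rb Rg Gu Gv Gw Lu Lv Lw.
have [->|uvw0] := eqVneq (br (br u v) w) 0; first exact: (subspace0 (V_La_subspace a)).
apply: (V_La_mem (b := formV gm)); first exact: root_formV; last first.
  apply: Lroot_eqH (Lroot_br (Lroot_br Lu Lv) Lw) => h _.
  by rewrite /br_weight /oppf /aphim subrr add0r.
have Lw' := Lroot_phiV Lw.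
have [vw0|] := eqVneq (br v (phiV w)) 0; last first.
  move=> vw0; apply: (connected_weight_step Cb Rb Rg).
  apply: Lroot_zero_or_root (Lroot_br Lv Lw') vw0.
  exact: br_weight_linear (root_linear (sym Rb)) (root_linear (root_formF Rg)).
have [wu0|wu0] := eqVneq (br (phiV w) u) 0.
  by move: uvw0; rewrite (br_br_eq0 Gu Gv Gw vw0 wu0) eqxx.
have Lwu : Lr (br_weight (oppf (oppf b)) (formF gm)) (br (phiV w) u).
  by apply: Lroot_eqH (Lroot_br Lw' Lu) => h _; rewrite /br_weight /oppf opprK addrC.
apply: (connected_weight_step (connected_opp Cb) (sym Rb) Rg).
apply: Lroot_zero_or_root Lwu wu0.
exact: br_weight_linear (root_linear (sym (sym Rb))) (root_linear (root_formF Rg)).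
Qed.

Lemma V_La_br_br a b gm u v w : conn a b -> root b -> root gm ->
  Lr b u -> Lr (oppf b) v -> Lr gm w -> VLa a (br (br u v) w).
Proof.
move=> Cb Rb Rg Lu Lv Lw.
have sP := subspace_preim (brDZl w) (V_La_subspace a).
apply: (Lroot_br_ind sP _ Lu Lv) => g g' x y Gx Gy Lx Ly.
apply: (Lroot_ind (subspace_preim (brDZr (br x y)) (V_La_subspace a)) _ Lw) => k w' Gw Lw'.
exact: V_La_br_br_homogeneous Cb Rb Rg Gx Gy Gw Lx Ly Lw'.
Qed.


Lemma L_La_br_root a x gm w : LLa a x -> root gm -> Lr gm w -> LLa a (br x w).
Proof.
move=> [h [v [Hh [[s [Ls ->]] ->]]]] Rg Lw; rewrite brDl.
apply: (subspaceD (L_La_subspace a)).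
  apply: L_La_of_V; apply: (span_min (subspace_preim (brDZl w) (V_La_subspace a)) _ Hh).
  by move=> _ [b [u [v' [Rb [Cb [Lu [Lv ->]]]]]]]; apply: V_La_br_br Cb Rb Rg Lu Lv Lw.
rewrite br_suml; apply: (subspace_sum (L_La_subspace a)); apply: sub_allP Ls.
by move=> p [Rp [Cp Lp]]; apply: L_La_br_roots Cp Rp Lp Rg Lw.
Qed.

Lemma L_La_br a x y : LLa a x -> LLa a (br x y).
Proof.
move=> Lx; have [h [s [Hh [Ls ->]]]] := spl y.
rewrite brDr; apply: (subspaceD (L_La_subspace a)); first exact: L_La_brH.
rewrite br_sumr; apply: (subspace_sum (L_La_subspace a)); apply: sub_allP Ls.
by move=> p [Rp Lp]; apply: L_La_br_root Rp Lp.
Qed.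

Lemma L_La_graded a : graded_sub Lg (LLa a).
Proof.
apply: (graded_subP Lg_graded (L_La_subspace a)) => x [h [v [Hh [[s [Ls ->]] ->]]]].
have sQ := homogeneous_sum_subspace Lg_graded (L_La_subspace a).
apply: (subspaceD sQ).
  apply: (span_min sQ _ Hh) => _ [b [u [v' [Rb [Cb [Lu [Lv ->]]]]]]].
  apply: (Lroot_br_ind sQ _ Lu Lv) => g g' x1 y1 Gx Gy Lx Ly.
  exists [:: (g + g', br x1 y1)]; rewrite big_seq1; split=> //; split=> //.
  by split; [exact: Lg_br Gx Gy|exact/L_La_of_H/(H_La_mem Rb Cb Lx Ly)].
apply: (subspace_sum sQ); apply: sub_allP Ls => p [Rp [Cp Lp]].
have [t [Lt ->]] := Lroot_homogeneous Lp.
exists t; split=> //; apply: sub_allP Lt => q [Gq Lq]; split=> //.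
exact/L_La_of_V/(V_La_mem Rp Cp Lq).
Qed.

Lemma L_La_map (f : L -> L) (F : (L -> K) -> L -> K) a :
  (forall c x y, f (c *: x + y) = c *: f x + f y) -> {morph f : u v / br u v} ->
  (forall b v, Lr b v -> Lr (F b) (f v)) -> (forall b, root b -> root (F b)) ->
  (forall b, conn a b -> conn a (F b)) -> (forall b, eqH (F (oppf b)) (oppf (F b))) ->
  forall x, LLa a x -> LLa a (f x).
Proof.
move=> fl fbr fL fR fC fO x [h [v [Hh [[s [Ls ->]] ->]]]].
have f0 : f 0 = 0 by have := fl (-1) 0 0; rewrite scaler0 addr0 scaleN1r addNr.
have fD : {morph f : u w / u + w} by move=> u w; have := fl 1 u w; rewrite !scale1r.
rewrite fD (big_morph f fD f0); exists (f h), (\sum_(p <- s) f p.2); split.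
  apply: (span_min (subspace_preim fl (span_subspace _)) _ Hh).
  move=> _ [b [u [v' [Rb [Cb [Lu [Lv ->]]]]]]]; rewrite fbr.
  exact: H_La_mem (fR _ Rb) (fC _ Cb) (fL _ _ Lu) (Lroot_eqH (fO b) (fL _ _ Lv)).
split=> //; exists (map (fun p => (F p.1, f p.2)) s); split; last by rewrite big_map.
apply: allP_map; apply: sub_allP Ls => p [Rp [Cp Lp]].
by split; [apply: fR|split; [apply: fC|apply: fL]].
Qed.

Lemma L_La_ideal a : ideal Lg br phi (LLa a).
Proof.
split; first exact: L_La_graded.
split; first by move=> x y; apply: L_La_br.
split=> [x|y Ly].
  apply: (L_La_map (F := fun b => formV b)) => //.
  - exact: phiDZ.
  - exact: phi_br.
  - exact: Lroot_phi.
  - exact: root_formV.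
  - exact: connected_formV.
exists (phiV y); split; last exact: phiVK.
apply: (L_La_map (F := formF)) Ly => //.
- exact: phiVDZ.
- exact: phiV_br.
- exact: Lroot_phiV.
- exact: root_formF.
- exact: connected_formF.
Qed.

Section Simple.
Hypothesis Lsimple : simple Lg br phi.

Lemma simple_L_La_full a : root a -> forall x, LLa a x.
Proof.
move=> Ra; have [_ simp] := Lsimple.
case: (simp _ (L_La_ideal a)) => // L0; case: (Ra) => [_ [_ [v [v0 Lv]]]].
by move: v0; rewrite (L0 v (L_La_of_V (V_La_mem Ra (connected_refl Ra) Lv))) eqxx.
Qed.

Lemma simple_root_exists : exists a, root a.
Proof.
have [[x [y xy0]] _] := Lsimple; apply: NNPP => noroot.
have allH z : H z.
  have [h [[|p s] [Hh [Ls ->]]]] := spl z; first by rewrite big_nil addr0.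
  by case: noroot; exists p.1; case: Ls => [[]].
by move: xy0; rewrite H_abelian ?eqxx.
Qed.

(* A root vector of weight [b] lies in L_{Lambda_a} = L; by the independence of root
   spaces one of the roots of that decomposition agrees with [b]. *)
Lemma simple_connected a b : root a -> root b -> conn a b.
Proof.
move=> Ra Rb; case: (Rb) => [_ [_ [v [v0 Lv]]]].
have [h [w [Hh [[s [Ls Ew]] Ev]]]] := simple_L_La_full Ra v.
apply: NNPP => nCab; move/eqP: v0; apply; apply: oppr_inj; rewrite oppr0.
apply: (@Lroot_independent ((zero_form, h) :: s) b).
- exact: (subspaceN (Lroot_subspace b)).
- split; first by split; [apply: Lroot0_of_H; apply: H_La_H Hh|apply: root_nonzero].
  apply: sub_allP Ls => p [Rp [Cp Lp]]; split=> // bp.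
  by apply: nCab; apply: (connected_eqH _ Cp) => h0 Hh0; rewrite bp.
by rewrite big_cons /= -Ew -Ev addNr.
Qed.

Lemma simple_H_eq_H_all x : H x <-> H_all Lg br phi H x.
Proof.
split=> [Hx|]; last first.
  move=> Hx; apply: (span_min H_subspace _ Hx) => _ [b [u [v [_ [Lu [Lv ->]]]]]].
  exact: H_of_br_opp Lu Lv.
have [a Ra] := simple_root_exists.
have [h [v [Hh [[s [Ls Ev]] Ex]]]] := simple_L_La_full Ra x.
have /subr0_eq hx : h - x = 0.
  apply: (Lroot0_independent (s := s)).
  - exact: Lroot0_of_H (subspaceB H_subspace (H_La_H Hh) Hx).
  - by apply: sub_allP Ls => p [Rp [_ Lp]].
  by rewrite Ex -Ev opprD addrA subrr add0r addNr.
rewrite -hx; apply: (span_mono _ Hh) => _ [b [u [v' [Rb [_ [Lu [Lv ->]]]]]]].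
by exists b, u, v'.
Qed.

End Simple.

End HomLieColorAlgebra.

Theorem mainTheorem9 (K : fieldType) (G : zmodType) (L : lmodType K)
    (Lg : G -> L -> Prop) (br : L -> L -> L) (phi : L -> L) (eps : G -> G -> K)
    (H : L -> Prop) :
  hom_lie_color Lg br phi eps ->
  regular phi ->
  max_abelian_graded_subalgebra Lg br phi H ->
  is_split Lg br phi H ->
  symmetric_roots Lg br phi H ->
  (forall a, is_root Lg br phi H a -> ideal Lg br phi (L_La Lg br phi H a)) /\
  (simple Lg br phi ->
     (forall a b, is_root Lg br phi H a -> is_root Lg br phi H b ->
        connected Lg br phi H a b) /\
     (forall x, H x <-> H_all Lg br phi H x)).
Proof.
move=> hl reg mag spl sym; split=> [a _|Lsimple].
  exact: L_La_ideal hl reg mag spl sym a.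
split=> [a b|x].
  exact: simple_connected hl reg mag spl sym Lsimple a b.
exact: simple_H_eq_H_all hl reg mag spl sym Lsimple x.
Qed.
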